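(* $\mathrm{add}(\mathcal{M})\leq\mathfrak{a}(nwd)$.
   Context: $\mathcal{M}$ is the ideal of meager subsets of $2^\omega$ and $\mathrm{add}(\mathcal{M})$ its additivity. $nwd$ is the ideal on $2^{<\omega}$ of nowhere dense sets: $A\in nwd$ iff for every $\sigma\in2^{<\omega}$ there is $\tau\supseteq\sigma$ such that no extension of $\tau$ belongs to $A$. For an ideal $\mathcal{J}$, $\mathfrak{a}(\mathcal{J})$ is the smallest size of an uncountable family $\mathcal{A}$ of $\mathcal{J}$-positive sets which is maximal with respect to the property that $A\cap B\in\mathcal{J}$ for all distinct $A,B\in\mathcal{A}$. *)

(* 2^omega = nat -> bool ; 2^{<omega} = list bool. *)
From Stdlib Require Import List.
Import ListNotations.

Definition extends (tau sigma : list bool) : Prop := exists r, tau = sigma ++ r.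

Definition in_basic (tau : list bool) (x : nat -> bool) : Prop :=
  forall i, i < length tau -> x i = nth i tau false.

Definition nowhere_dense (X : (nat -> bool) -> Prop) : Prop :=
  forall sigma, exists tau, extends tau sigma /\
    forall x, in_basic tau x -> ~ X x.

Definition meager (X : (nat -> bool) -> Prop) : Prop :=
  exists N : nat -> (nat -> bool) -> Prop,
    (forall n, nowhere_dense (N n)) /\ (forall x, X x -> exists n, N n x).

Definition nwd (A : list bool -> Prop) : Prop :=
  forall sigma, exists tau, extends tau sigma /\
    forall rho, extends rho tau -> ~ A rho.

Definition inter (A B : list bool -> Prop) : list bool -> Prop :=
  fun s => A s /\ B s.

Definition uncountable_family (calA : (list bool -> Prop) -> Prop) : Prop :=
  ~ exists f : {A | calA A} -> nat, forall a b, f a = f b -> a = b.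

Definition nwd_mad (calA : (list bool -> Prop) -> Prop) : Prop :=
  uncountable_family calA /\
  (forall A, calA A -> ~ nwd A) /\
  (forall A B, calA A -> calA B -> A <> B -> nwd (inter A B)) /\
  (forall B, ~ nwd B -> ~ calA B ->
     ~ (forall A, calA A -> nwd (inter A B))).

From Stdlib Require Import List Arith Lia Classical ClassicalEpsilon ProofIrrelevance Cantor.
Import ListNotations.

(* Suppose every family of at most |calA| meager sets had a meager union.
   Since calA is uncountable, infinitely many distinct members A_0, A_1, ...
   of calA are dense below one node s0.  Through the block characterization of
   meager sets, the additivity yields both a dominating bound and a matching
   principle for block patterns, and together they produce one map e, with
   e r extending r, such that for every A in calA and all long enough r, no
   extension of e r lies in A ∩ A_j for j <= |r| and A_j <> A.  Picking
   w r ⊇ e r in A_|r| for every r ⊇ s0, the set B = {w r} is nwd-positive yet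
   almost disjoint from every member of calA, contradicting maximality. *)

Lemma extends_app t r : extends (t ++ r) t.
Proof. now exists r. Qed.

Lemma extends_refl t : extends t t.
Proof. exists []. now rewrite app_nil_r. Qed.

Lemma extends_trans a b c : extends a b -> extends b c -> extends a c.
Proof. intros [r1 ->] [r2 ->]. exists (r2 ++ r1). now rewrite app_assoc. Qed.

Lemma extends_length a b : extends a b -> length b <= length a.
Proof. intros [r ->]. rewrite length_app. lia. Qed.

Lemma in_basic_app t r x : in_basic (t ++ r) x -> in_basic t x.
Proof.
  intros Hx i Hi. rewrite Hx by (rewrite length_app; lia). now rewrite app_nth1.
Qed.

Definition open_dense (P : list bool -> Prop) : Prop :=
  (forall t r, P t -> P (t ++ r)) /\ (forall t, exists r, P (t ++ r)).

Lemma open_dense_nwd A : nwd A -> open_dense (fun t => forall u, extends u t -> ~ A u).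
Proof.
  intros HA. split.
  - intros t r Ht u Hu. apply Ht. eapply extends_trans; [exact Hu | apply extends_app].
  - intros t. destruct (HA t) as [tau [[r ->] Htau]]. now exists r.
Qed.

Lemma open_dense_nowhere_dense X :
  nowhere_dense X -> open_dense (fun t => forall x, in_basic t x -> ~ X x).
Proof.
  intros HX. split.
  - intros t r Ht x Hx. exact (Ht x (in_basic_app t r x Hx)).
  - intros t. destruct (HX t) as [tau [[r ->] Htau]]. now exists r.
Qed.

Lemma open_dense_bounded_inter (P : nat -> list bool -> Prop) :
  (forall j, open_dense (P j)) -> forall J, open_dense (fun t => forall j, j <= J -> P j t).
Proof.
  intros HP J. split.
  { intros t r Ht j Hj. apply (proj1 (HP j)). now apply Ht. }
  induction J as [|J IH]; intros t.
  - destruct (proj2 (HP 0) t) as [r Hr]. exists r. intros j Hj.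
    now replace j with 0 by lia.
  - destruct (IH t) as [r1 Hr1]. destruct (proj2 (HP (S J)) (t ++ r1)) as [r2 Hr2].
    exists (r1 ++ r2). rewrite app_assoc. intros j Hj.
    destruct (Nat.eq_dec j (S J)) as [->|Hne]; [exact Hr2|].
    apply (proj1 (HP j)), Hr1. lia.
Qed.

(* Induction on [m]: a uniform extension for all [u] of length [m + 1] is one
   for the open dense set of [t] with both [true :: t] and [false :: t] in [P]. *)
Lemma open_dense_uniform P :
  open_dense P -> forall m, exists b, forall u, length u = m -> P (u ++ b).
Proof.
  intros HP m. revert P HP. induction m as [|m IH]; intros P [Hup Hdense].
  - destruct (Hdense []) as [b Hb]. exists b. intros [|c u] Hu; [exact Hb | discriminate].
  - destruct (IH (fun t => P (true :: t) /\ P (false :: t))) as [b Hb].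
    + split.
      * intros t r [Ht Hf]. exact (conj (Hup _ r Ht) (Hup _ r Hf)).
      * intros t. destruct (Hdense (true :: t)) as [r1 Hr1].
        destruct (Hdense (false :: t ++ r1)) as [r2 Hr2].
        exists (r1 ++ r2). rewrite app_assoc. split; [exact (Hup _ r2 Hr1) | exact Hr2].
    + exists b. intros [|[|] u] Hu; [discriminate | |]; apply Hb; simpl in Hu; lia.
Qed.
Definition segment (x : nat -> bool) (s L : nat) : list bool := map x (seq s L).

Lemma segment_length x s L : length (segment x s L) = L.
Proof. unfold segment. now rewrite length_map, length_seq. Qed.

Lemma segment_nth x s L i : i < L -> nth i (segment x s L) false = x (s + i).
Proof.
  intros Hi. unfold segment.
  rewrite nth_indep with (d' := x 0) by (rewrite length_map, length_seq; lia).
  now rewrite map_nth, seq_nth.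
Qed.

Lemma segment_add x s a b : segment x s (a + b) = segment x s a ++ segment x (s + a) b.
Proof. unfold segment. now rewrite seq_app, map_app. Qed.

Lemma segment_split x a b c d : a <= b -> b <= c -> c <= d ->
  segment x a (d - a) = segment x a (b - a) ++ segment x b (c - b) ++ segment x c (d - c).
Proof.
  intros Hab Hbc Hcd.
  replace (d - a) with ((b - a) + ((c - b) + (d - c))) by lia.
  rewrite !segment_add. do 2 f_equal; f_equal; lia.
Qed.

Lemma segment_ext x y s L :
  (forall k, s <= k < s + L -> x k = y k) -> segment x s L = segment y s L.
Proof. intros Hxy. apply map_ext_in. intros k Hk. apply in_seq in Hk. apply Hxy. lia. Qed.

Lemma in_basic_segment_app x s b :
  (forall i, i < length b -> x (s + i) = nth i b false) -> in_basic (segment x 0 s ++ b) x.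
Proof.
  intros Hb i Hi. rewrite length_app, segment_length in Hi.
  destruct (Nat.lt_ge_cases i s) as [His|His].
  - rewrite app_nth1 by (now rewrite segment_length). now rewrite segment_nth.
  - rewrite app_nth2 by (now rewrite segment_length). rewrite segment_length.
    replace i with (s + (i - s)) at 1 by lia. apply Hb. lia.
Qed.

Definition increasing (f : nat -> nat) : Prop := forall k, f k < f (S k).

Section Increasing.

Variable f : nat -> nat.
Hypothesis f_incr : increasing f.

Lemma increasing_lt a b : a < b -> f a < f b.
Proof. induction 1; [apply f_incr | specialize (f_incr m); lia]. Qed.

Lemma increasing_le a b : a <= b -> f a <= f b.
Proof.
  intros Hab. destruct (Nat.eq_dec a b) as [->|]; [lia|].
  apply Nat.lt_le_incl, increasing_lt. lia.
Qed.

Lemma increasing_le_inv a b : f a <= f b -> a <= b.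
Proof.
  intros H. destruct (Nat.le_gt_cases a b) as [|Hba]; [easy|].
  pose proof (increasing_lt b a Hba). lia.
Qed.

Lemma increasing_ge_id k : k <= f k.
Proof. induction k; [lia|]. specialize (f_incr k). lia. Qed.

Lemma increasing_block_unique m m' k :
  f m <= k < f (S m) -> f m' <= k < f (S m') -> m = m'.
Proof.
  intros Hm Hm'.
  destruct (Nat.lt_trichotomy m m') as [Hlt|[Heq|Hlt]]; [|exact Heq|];
    apply increasing_le in Hlt; lia.
Qed.

End Increasing.

Fixpoint block_of (l : nat -> nat) (k : nat) : nat :=
  match k with
  | 0 => 0
  | S k' => let m := block_of l k' in if l (S m) <=? S k' then S m else m
  end.

Lemma block_of_spec l : increasing l -> l 0 = 0 ->
  forall k, l (block_of l k) <= k < l (S (block_of l k)).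
Proof.
  intros Hl Hl0 k. induction k as [|k IH]; simpl.
  - specialize (Hl 0). lia.
  - destruct (Nat.leb_spec (l (S (block_of l k))) (S k)).
    + specialize (Hl (S (block_of l k))). lia.
    + lia.
Qed.

Lemma block_of_unique l m k : increasing l -> l 0 = 0 ->
  l m <= k < l (S m) -> block_of l k = m.
Proof.
  intros Hl Hl0 Hk. exact (increasing_block_unique l Hl _ _ k (block_of_spec l Hl Hl0 k) Hk).
Qed.

Definition eventually (P : nat -> Prop) : Prop := exists N, forall n, N <= n -> P n.

Definition infinitely_often (P : nat -> Prop) : Prop := forall M, exists m, M <= m /\ P m.

Lemma not_eventually P : ~ eventually P -> infinitely_often (fun n => ~ P n).
Proof.
  intros HP M. apply NNPP. intros HM. apply HP. exists M. intros n Hn.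
  apply NNPP. intros Hn'. apply HM. now exists n.
Qed.

Fixpoint sparse (P : nat -> Prop) (n : nat) : Prop :=
  match n with
  | 0 => P 0
  | S n' => P (S n') /\ ~ sparse P n'
  end.

Lemma sparse_sub P n : sparse P n -> P n.
Proof. destruct n; simpl; tauto. Qed.

Lemma infinitely_often_sparse P : infinitely_often P -> infinitely_often (sparse P).
Proof.
  intros HP M. destruct (HP (S M)) as [[|n] [Hn Pn]]; [lia|].
  destruct (classic (sparse P (S n))) as [Hs|Hs].
  - exists (S n). split; [lia | exact Hs].
  - exists n. split; [lia|]. apply NNPP. intros Hn'. now apply Hs.
Qed.

Definition agrees_on (x y : nat -> bool) (a b : nat) : Prop :=
  forall k, a <= k < b -> x k = y k.

Fixpoint escape_partition (G : nat -> nat) (b : nat -> nat -> list bool) (m : nat) : nat :=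
  match m with
  | 0 => 0
  | S m' => let p := escape_partition G b m' in p + G p + length (b m' (G p)) + 1
  end.

(* The blocks [G (p m), G (p (S m))) of [y] are chosen so that any [x] that
   agrees with [y] on block [m] escapes [N 0], ..., [N m], whatever [x] does below. *)
Lemma meager_block_escape (N : nat -> (nat -> bool) -> Prop) (G : nat -> nat) :
  (forall j, nowhere_dense (N j)) -> increasing G -> G 0 = 0 ->
  exists (y : nat -> bool) (p : nat -> nat), increasing p /\ p 0 = 0 /\
    forall x, infinitely_often (fun m => agrees_on x y (G (p m)) (G (p (S m)))) ->
    forall j, ~ N j x.
Proof.
  intros HN HG HG0.
  assert (Hb : forall ms : nat * nat, exists b, forall u, length u = snd ms ->
            forall j, j <= fst ms -> forall x, in_basic (u ++ b) x -> ~ N j x).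
  { intros [m s]. simpl.
    apply (open_dense_uniform (fun t => forall j, j <= m -> forall x, in_basic t x -> ~ N j x)).
    apply open_dense_bounded_inter. intros j. now apply open_dense_nowhere_dense. }
  destruct (choice _ Hb) as [b0 Hb0].
  set (b := fun m s => b0 (m, s)).
  set (p := escape_partition G b).
  assert (Hp : increasing p) by (intros m; unfold p; simpl; lia).
  assert (HGp : increasing (fun m => G (p m))) by (intros m; now apply increasing_lt).
  exists (fun k => let m := block_of (fun m => G (p m)) k in
                   nth (k - G (p m)) (b m (G (p m))) false), p.
  split; [exact Hp | split; [reflexivity|]].
  intros x Hx j. destruct (Hx j) as [m [Hjm Hm]].
  set (s := G (p m)) in *.
  assert (Hend : s + length (b m s) < G (p (S m))).
  { pose proof (increasing_ge_id G HG (p (S m))).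
    assert (p (S m) = p m + s + length (b m s) + 1) by reflexivity. lia. }
  apply (Hb0 (m, s) (segment x 0 s) (segment_length x 0 s) j Hjm).
  apply in_basic_segment_app. intros i Hi. change (i < length (b m s)) in Hi.
  rewrite Hm by lia. cbv zeta.
  rewrite (block_of_unique _ m) by (auto; lia).
  f_equal. lia.
Qed.

Definition meager_union_closed (I : Type) : Prop :=
  forall F : I -> (nat -> bool) -> Prop,
    (forall i, meager (F i)) -> meager (fun x => exists i, F i x).

(* [F i] is the meager set of [x] with a [true] in every window [[n, f i n]]
   from some point on.  If [f i] escaped [D], an [x] copying [y] on sparse
   blocks [m] with [a (m + 2) < f i m] and [true] elsewhere would lie in [F i]
   but outside the union. *)
Lemma dominating_of_meager_union_closed (I : Type) (f : I -> nat -> nat) :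
  meager_union_closed I -> (forall i n, n <= f i n) ->
  (forall i n m, n <= m -> f i n <= f i m) ->
  exists D : nat -> nat, forall i, eventually (fun n => f i n <= D n).
Proof.
  intros Hadd Hid Hmono.
  set (Z := fun i N0 (x : nat -> bool) =>
              forall n, N0 <= n -> exists k, n <= k <= f i n /\ x k = true).
  destruct (Hadd (fun i x => exists N0, Z i N0 x)) as [Nc [HNc Hcov]].
  { intros i. exists (Z i). split; [|easy].
    intros N0 sigma. set (n := N0 + length sigma).
    exists (sigma ++ repeat false (S (f i n) - length sigma)). split; [apply extends_app|].
    intros x Hx HZ. destruct (HZ n ltac:(lia)) as [k [Hk Hxk]].
    rewrite Hx, app_nth2, nth_repeat in Hxk by (rewrite ?length_app, ?repeat_length; lia).
    discriminate. }
  destruct (meager_block_escape Nc (fun k => k) HNc ltac:(intro; lia) eq_refl)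
    as [y [a [Ha [Ha0 Hesc]]]].
  exists (fun n => a (S (S n))). intros i. apply NNPP. intros Hno.
  set (P := fun n => a (S (S n)) < f i n).
  assert (HP : infinitely_often (sparse P)).
  { apply infinitely_often_sparse. intros M.
    destruct (not_eventually _ Hno M) as [n [Hn Hlt]].
    exists n. split; [easy|]. unfold P. lia. }
  set (x := fun k => if excluded_middle_informative
                          (exists m, sparse P m /\ a m <= k < a (S m))
                     then y k else true).
  assert (Hx : exists N0, Z i N0 x).
  { exists 0. intros n _.
    destruct (x n) eqn:Hxn; [exists n; split; [split; [easy | apply Hid] | easy]|].
    unfold x in Hxn.
    destruct (excluded_middle_informative _) as [[m [Hm Hnm]]|]; [|discriminate].
    exists (a (S m)). split.
    - pose proof (sparse_sub _ _ Hm). pose proof (increasing_ge_id a Ha m).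
      pose proof (Hmono i m n ltac:(lia)). pose proof (Ha (S m)). unfold P in *. lia.
    - unfold x. destruct (excluded_middle_informative _) as [[m' [Hm' Hr]]|]; [|reflexivity].
      assert (m' = S m) as -> by (apply (increasing_block_unique a Ha m' (S m) (a (S m)) Hr);
                                  pose proof (Ha (S m)); lia).
      now destruct Hm'. }
  destruct (Hcov x (ex_intro _ i Hx)) as [j Hj].
  apply (Hesc x) with j; [|exact Hj].
  intros M. destruct (HP M) as [m [HMm Hm]]. exists m. split; [easy|].
  intros k Hk. unfold x. destruct (excluded_middle_informative _) as [|Hn]; [easy|].
  exfalso. apply Hn. now exists m.
Qed.

Definition block (l : nat -> nat) (x : nat -> bool) (k : nat) : list bool :=
  segment x (l k) (l (S k) - l k).

(* [F i] is the meager set of [x] whose blocks eventually all differ from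
   [U i].  If infinitely many [p]-ranges of [y] contained no [U i k], an [x]
   copying [y] on those ranges and differing from [U i k] in the first bit of
   every other block [k] would lie in [F i] but outside the union. *)
Lemma block_matching_of_meager_union_closed (I : Type) (l : nat -> nat)
  (U : I -> nat -> list bool) :
  meager_union_closed I -> increasing l -> l 0 = 0 ->
  (forall i k, length (U i k) = l (S k) - l k) ->
  exists (y : nat -> bool) (p : nat -> nat), increasing p /\ p 0 = 0 /\
    forall i, eventually (fun m => exists k, p m <= k < p (S m) /\ block l y k = U i k).
Proof.
  intros Hadd Hl Hl0 HU.
  set (Z := fun i N0 (x : nat -> bool) => forall k, N0 <= k -> block l x k <> U i k).
  destruct (Hadd (fun i x => exists N0, Z i N0 x)) as [Nc [HNc Hcov]].
  { intros i. exists (Z i). split; [|easy].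
    intros N0 sigma. set (k := N0 + length sigma).
    pose proof (increasing_ge_id l Hl k).
    set (t := sigma ++ repeat false (l k - length sigma)).
    assert (Ht : length t = l k) by (unfold t; rewrite length_app, repeat_length; lia).
    exists (t ++ U i k). split; [unfold t; rewrite <- app_assoc; apply extends_app|].
    intros x Hx HZ. apply (HZ k ltac:(lia)).
    apply nth_ext with (d := false) (d' := false);
      unfold block; rewrite segment_length, ?HU; [easy|].
    intros n Hn. rewrite segment_nth, Hx, app_nth2 by (rewrite ?length_app, ?Ht, ?HU; lia).
    rewrite Ht. f_equal. lia. }
  destruct (meager_block_escape Nc l HNc Hl Hl0) as [y [p [Hp [Hp0 Hesc]]]].
  exists y, p. split; [exact Hp | split; [exact Hp0|]].
  intros i. apply NNPP. intros Hno.
  set (Bad := fun m => ~ exists k, p m <= k < p (S m) /\ block l y k = U i k).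
  set (x := fun n => let k := block_of l n in
              if excluded_middle_informative (exists m, Bad m /\ l (p m) <= n < l (p (S m)))
              then y n else negb (nth (n - l k) (U i k) false)).
  assert (Hx : exists N0, Z i N0 x).
  { exists 0. intros k _ Heq. pose proof (Hl k) as Hk.
    destruct (excluded_middle_informative (exists m, Bad m /\ p m <= k < p (S m)))
      as [[m [Bm Hm]]|Hn].
    - apply Bm. exists k. split; [easy|]. rewrite <- Heq. apply segment_ext.
      intros n Hn. unfold x. destruct (excluded_middle_informative _) as [|Hn']; [easy|].
      exfalso. apply Hn'. exists m. split; [easy|].
      pose proof (increasing_le l Hl (p m) k). pose proof (increasing_le l Hl (S k) (p (S m))).
      lia.
    - assert (H0 : nth 0 (block l x k) false = nth 0 (U i k) false) by now rewrite Heq.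
      unfold block in H0. rewrite segment_nth, Nat.add_0_r in H0 by lia.
      unfold x in H0. rewrite (block_of_unique l k (l k)) in H0 by (auto; lia).
      destruct (excluded_middle_informative _) as [[m [Bm Hm]]|_].
      + apply Hn. exists m. split; [easy|].
        split; [apply (increasing_le_inv l Hl); lia|].
        destruct (Nat.lt_ge_cases k (p (S m))) as [|Hge]; [easy|].
        apply (increasing_le l Hl) in Hge. lia.
      + rewrite Nat.sub_diag in H0. now destruct (nth 0 (U i k) false). }
  destruct (Hcov x (ex_intro _ i Hx)) as [j Hj].
  apply (Hesc x) with j; [|exact Hj].
  intros M. destruct (not_eventually _ Hno M) as [m [HMm Bm]]. exists m. split; [easy|].
  intros n Hn. unfold x. destruct (excluded_middle_informative _) as [|Hn']; [easy|].
  exfalso. apply Hn'. now exists m.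
Qed.

Definition avoids (Q : nat -> list bool -> Prop) (J : nat) (t : list bool) : Prop :=
  forall j, j <= J -> forall u, extends u t -> ~ Q j u.

Lemma avoids_app Q J t r : avoids Q J t -> avoids Q J (t ++ r).
Proof.
  intros Ht j Hj u Hu. apply (Ht j Hj). eapply extends_trans; [exact Hu | apply extends_app].
Qed.

Lemma open_dense_avoids Q J : (forall j, nwd (Q j)) -> open_dense (avoids Q J).
Proof.
  intros HQ. apply (open_dense_bounded_inter (fun j t => forall u, extends u t -> ~ Q j u)).
  intros j. now apply open_dense_nwd.
Qed.

Fixpoint partial_sum (h : nat -> nat) (n : nat) : nat :=
  match n with
  | 0 => h 0
  | S n' => partial_sum h n' + h (S n')
  end.

Lemma partial_sum_mono h n m : n <= m -> partial_sum h n <= partial_sum h m.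
Proof. induction 1; simpl; lia. Qed.

Lemma partial_sum_ge h n : h n <= partial_sum h n.
Proof. destruct n; simpl; lia. Qed.

Fixpoint gap_partition (D : nat -> nat) (k : nat) : nat :=
  match k with
  | 0 => 0
  | S k' => gap_partition D k' + D (gap_partition D k') + 1
  end.

(* [U i k] starts with an extension that makes every [u] of length [l k] avoid
   [Q i 0], ..., [Q i (l k)]; the lengths of these extensions are eventually
   dominated by a single [D], which fixes the gaps of [l]. *)
Lemma avoiding_blocks_of_meager_union_closed (I : Type) (Q : I -> nat -> list bool -> Prop) :
  meager_union_closed I -> (forall i j, nwd (Q i j)) ->
  exists (l : nat -> nat) (U : I -> nat -> list bool), increasing l /\ l 0 = 0 /\
    (forall i k, length (U i k) = l (S k) - l k) /\
    forall i, eventually (fun k => forall u, length u = l k -> avoids (Q i) (l k) (u ++ U i k)).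
Proof.
  intros Hadd HQ.
  assert (Hub : forall im : I * nat, exists b,
            forall u, length u = snd im -> avoids (Q (fst im)) (snd im) (u ++ b)).
  { intros [i m]. now apply open_dense_uniform, open_dense_avoids. }
  destruct (choice _ Hub) as [ub0 Hub0].
  set (ub := fun i m => ub0 (i, m)).
  set (f := fun i n => n + partial_sum (fun m => length (ub i m)) n).
  destruct (dominating_of_meager_union_closed I f Hadd) as [D HD].
  { intros i n. unfold f. lia. }
  { intros i n m Hnm. unfold f. pose proof (partial_sum_mono (fun m => length (ub i m)) n m Hnm).
    lia. }
  set (l := gap_partition D).
  assert (Hl : increasing l) by (intros k; unfold l; simpl; lia).
  exists l, (fun i k => firstn (l (S k) - l k) (ub i (l k) ++ repeat false (l (S k) - l k))).
  split; [exact Hl | split; [reflexivity | split]].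
  - intros i k. rewrite length_firstn, length_app, repeat_length. lia.
  - intros i. destruct (HD i) as [N HN]. exists N. intros k Hk u Hu.
    pose proof (increasing_ge_id l Hl k).
    specialize (HN (l k) ltac:(lia)). unfold f in HN.
    pose proof (partial_sum_ge (fun m => length (ub i m)) (l k)).
    assert (Hgap : l (S k) - l k = D (l k) + 1) by (unfold l; simpl; lia).
    rewrite firstn_app, firstn_all2, app_assoc by (simpl in *; lia).
    apply avoids_app. exact (Hub0 (i, l k) u Hu).
Qed.

Lemma uniform_avoidance_of_meager_union_closed (I : Type) (Q : I -> nat -> list bool -> Prop) :
  meager_union_closed I -> (forall i j, nwd (Q i j)) ->
  exists e : list bool -> list bool, (forall r, extends (e r) r) /\
    forall i, eventually (fun n => forall r, length r = n -> avoids (Q i) n (e r)).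
Proof.
  intros Hadd HQ.
  destruct (avoiding_blocks_of_meager_union_closed I Q Hadd HQ)
    as [l [U [Hl [Hl0 [HU Havoid]]]]].
  destruct (block_matching_of_meager_union_closed I l U Hadd Hl Hl0 HU)
    as [y [p [Hp [Hp0 Hmatch]]]].
  set (e := fun r => let n := length r in
              (r ++ repeat false (l (p n) - n)) ++ segment y (l (p n)) (l (p (S n)) - l (p n))).
  exists e. split.
  { intros r. unfold e. rewrite <- app_assoc. apply extends_app. }
  intros i. destruct (Hmatch i) as [M HM]. destruct (Havoid i) as [K HK].
  exists (M + K). intros n Hn r Hr.
  destruct (HM n ltac:(lia)) as [k [Hk Hblock]].
  pose proof (increasing_ge_id p Hp n). pose proof (increasing_ge_id l Hl (p n)).
  pose proof (increasing_ge_id l Hl k). pose proof (Hl k).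
  pose proof (increasing_le l Hl (p n) k ltac:(lia)).
  pose proof (increasing_le l Hl (S k) (p (S n)) ltac:(lia)).
  set (u := (r ++ repeat false (l (p n) - n)) ++ segment y (l (p n)) (l k - l (p n))).
  assert (Hu : length u = l k).
  { unfold u. rewrite !length_app, repeat_length, segment_length. lia. }
  assert (He : e r = (u ++ U i k) ++ segment y (l (S k)) (l (p (S n)) - l (S k))).
  { unfold e, u. rewrite Hr, (segment_split y (l (p n)) (l k) (l (S k))) by lia.
    rewrite <- Hblock. unfold block. now rewrite !app_assoc. }
  rewrite He. apply avoids_app. intros j Hj. apply (HK k ltac:(lia) u Hu j). lia.
Qed.

Definition dense_below (A : list bool -> Prop) (s : list bool) : Prop :=
  forall t, extends t s -> exists u, extends u t /\ A u.

Lemma dense_below_of_not_nwd A : ~ nwd A -> exists s, dense_below A s.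
Proof.
  intros HA. apply NNPP. intros Hno. apply HA. intros s.
  apply NNPP. intros Hs. apply Hno. exists s. intros t Ht.
  apply NNPP. intros Hu. apply Hs. exists t. split; [exact Ht|].
  intros r Hr HAr. apply Hu. now exists r.
Qed.

Lemma cantor_to_nat_inj a b : Cantor.to_nat a = Cantor.to_nat b -> a = b.
Proof. intros H. now rewrite <- (Cantor.cancel_of_to a), <- (Cantor.cancel_of_to b), H. Qed.

Fixpoint list_bool_code (l : list bool) : nat :=
  match l with
  | [] => 0
  | b :: l' => S (Cantor.to_nat (Nat.b2n b, list_bool_code l'))
  end.

Lemma list_bool_code_inj l1 l2 : list_bool_code l1 = list_bool_code l2 -> l1 = l2.
Proof.
  revert l2. induction l1 as [|b l1 IH]; intros [|c l2] H; cbn [list_bool_code] in H; try easy.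
  apply Nat.succ_inj, cantor_to_nat_inj in H. injection H as Hbc Hl.
  apply IH in Hl as ->. now destruct b, c.
Qed.

(* Otherwise [A] is determined by a node [s] below which it is dense and its
   position in the finite list of such sets, which counts the family. *)
Lemma uncountable_dense_below (calA : (list bool -> Prop) -> Prop) :
  uncountable_family calA -> (forall A, calA A -> ~ nwd A) ->
  exists s, forall L : list (list bool -> Prop),
    exists A, (calA A /\ dense_below A s) /\ ~ In A L.
Proof.
  intros Hunc Hpos. apply NNPP. intros Hno.
  assert (HL : forall s, exists L : list (list bool -> Prop),
             forall A, calA A -> dense_below A s -> In A L).
  { intros s. apply NNPP. intros HL. apply Hno. exists s. intros L.
    apply NNPP. intros HA. apply HL. exists L. intros A HcA Hd.
    apply NNPP. intros Hin. apply HA. now exists A. }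
  destruct (choice _ HL) as [L HLs].
  assert (Hs : forall a : {A | calA A}, exists s, dense_below (proj1_sig a) s).
  { intros [A HA]. now apply dense_below_of_not_nwd, Hpos. }
  destruct (choice _ Hs) as [s Hsa].
  assert (Hk : forall a : {A | calA A}, exists k, nth_error (L (s a)) k = Some (proj1_sig a)).
  { intros a. apply In_nth_error, HLs; [exact (proj2_sig a) | apply Hsa]. }
  destruct (choice _ Hk) as [k Hka].
  apply Hunc. exists (fun a => Cantor.to_nat (list_bool_code (s a), k a)).
  intros a b Hab. apply cantor_to_nat_inj in Hab. injection Hab as Hs_eq Hk_eq.
  apply list_bool_code_inj in Hs_eq.
  pose proof (Hka a) as Ha. rewrite Hs_eq, Hk_eq, Hka in Ha. injection Ha as Hab.
  destruct a as [A HA], b as [B HB]. simpl in Hab. subst B.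
  f_equal. apply proof_irrelevance.
Qed.

Fixpoint first_picks {X : Type} (pick : list X -> X) (n : nat) : list X :=
  match n with
  | 0 => []
  | S n' => pick (first_picks pick n') :: first_picks pick n'
  end.

Lemma injective_sequence (X : Type) (P : X -> Prop) :
  (forall L : list X, exists x, P x /\ ~ In x L) ->
  exists a : nat -> X, (forall n, P (a n)) /\ (forall n m, a n = a m -> n = m).
Proof.
  intros HP. destruct (choice _ HP) as [pick Hpick].
  assert (Hin : forall n m, n < m -> In (pick (first_picks pick n)) (first_picks pick m)).
  { intros n m Hnm. induction Hnm; simpl; auto. }
  exists (fun n => pick (first_picks pick n)). split; [intros n; apply Hpick|].
  intros n m Hnm. destruct (Nat.lt_trichotomy n m) as [Hlt|[Heq|Hlt]]; [|exact Heq|]; exfalso.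
  - apply (proj2 (Hpick (first_picks pick m))). rewrite <- Hnm. now apply Hin.
  - apply (proj2 (Hpick (first_picks pick n))). rewrite Hnm. now apply Hin.
Qed.

Lemma bounded_on_short_lists (f : list bool -> nat) M :
  exists L, forall r, length r <= M -> f r <= L.
Proof.
  revert f. induction M as [|M IH]; intros f.
  - exists (f []). intros [|c r] Hr; simpl in Hr; lia.
  - destruct (IH (fun r => Nat.max (f (true :: r)) (f (false :: r)))) as [L HL].
    exists (Nat.max (f []) L). intros [|[|] r] Hr; [lia| |];
      simpl in Hr; specialize (HL r ltac:(lia)); lia.
Qed.

Lemma diagonal_positive_set (s0 : list bool) (An : nat -> list bool -> Prop)
  (e : list bool -> list bool) :
  (forall n, dense_below (An n) s0) -> (forall n m, An n = An m -> n = m) ->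
  (forall r, extends (e r) r) ->
  exists B, ~ nwd B /\
    forall A, eventually (fun n => forall r, length r = n ->
                forall u, extends u (e r) -> ~ (A u /\ An n u /\ A <> An n)) ->
    nwd (inter A B).
Proof.
  intros Hdense Hinj He.
  assert (Hw : forall r, exists u, extends r s0 -> extends u (e r) /\ An (length r) u).
  { intros r. destruct (classic (extends r s0)) as [Hr|Hr]; [|now exists []].
    destruct (Hdense (length r) (e r) (extends_trans _ _ _ (He r) Hr)) as [u Hu].
    now exists u. }
  destruct (choice _ Hw) as [w Hwr].
  exists (fun u => exists r, extends r s0 /\ u = w r). split.
  - intros HB. destruct (HB s0) as [t [Ht Hno]]. apply (Hno (w t)).
    + destruct (Hwr t Ht) as [Hwt _]. eapply extends_trans; [exact Hwt | apply He].
    + now exists t.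
  - intros A [N HN].
    assert (HM : exists M, forall n, M < n -> A <> An n).
    { destruct (classic (exists j, A = An j)) as [[j ->]|Hnj]; [exists j | exists 0];
        intros n Hn Heq; [apply Hinj in Heq; lia | apply Hnj; eauto]. }
    destruct HM as [M HM].
    destruct (bounded_on_short_lists (fun r => length (w r)) (N + M)) as [L HL].
    intros s. exists (s ++ repeat false (S L)). split; [apply extends_app|].
    intros u Hu [HAu [r [Hr ->]]].
    destruct (Nat.le_gt_cases (length r) (N + M)) as [Hle|Hgt].
    + specialize (HL r Hle). apply extends_length in Hu.
      rewrite length_app, repeat_length in Hu. simpl in HL. lia.
    + destruct (Hwr r Hr) as [Hwe HAn].
      apply (HN (length r) ltac:(lia) r eq_refl (w r) Hwe).
      split; [exact HAu | split; [exact HAn | apply HM; lia]].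
Qed.

Lemma nwd_of_nwd_inter_self B : nwd (inter B B) -> nwd B.
Proof.
  intros HB s. destruct (HB s) as [t [Ht Hno]].
  exists t. split; [exact Ht|]. intros r Hr HBr. exact (Hno r Hr (conj HBr HBr)).
Qed.

Theorem mainTheorem19 :
  forall calA : (list bool -> Prop) -> Prop,
    nwd_mad calA ->
    exists (I : Type) (F : I -> (nat -> bool) -> Prop) (g : I -> {A | calA A}),
      (forall i j, g i = g j -> i = j) /\
      (forall i, meager (F i)) /\
      ~ meager (fun x => exists i, F i x).
Proof.
  intros calA [Hunc [Hpos [Had Hmax]]].
  apply NNPP. intros Hno.
  assert (Hadd : meager_union_closed {A | calA A}).
  { intros F HF. apply NNPP. intros Hnm. apply Hno. now exists _, F, (fun a => a). }
  destruct (uncountable_dense_below calA Hunc Hpos) as [s0 Hs0].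
  destruct (injective_sequence _ _ Hs0) as [An [HAn HAn_inj]].
  set (Q := fun (a : {A | calA A}) j u => proj1_sig a u /\ An j u /\ proj1_sig a <> An j).
  assert (HQ : forall a j, nwd (Q a j)).
  { intros [A HA] j. destruct (classic (A = An j)) as [Heq|Hne].
    - intros s. exists s. split; [apply extends_refl | now intros r _ (_ & _ & Hne)].
    - intros s. destruct (Had _ _ HA (proj1 (HAn j)) Hne s) as [t [Ht Hdisj]].
      exists t. split; [exact Ht|].
      intros r Hr (HAr & HAnr & _). exact (Hdisj r Hr (conj HAr HAnr)). }
  destruct (uniform_avoidance_of_meager_union_closed _ Q Hadd HQ) as [e [He Havoid]].
  destruct (diagonal_positive_set s0 An e (fun n => proj2 (HAn n)) HAn_inj He)
    as [B [HB HBad]].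
  assert (HBall : forall A, calA A -> nwd (inter A B)).
  { intros A HA. apply HBad. destruct (Havoid (exist _ A HA)) as [N HN].
    exists N. intros n Hn r Hr. exact (HN n Hn r Hr n (le_n n)). }
  apply (Hmax B HB); [|exact HBall].
  intros HcB. apply HB, nwd_of_nwd_inter_self, HBall, HcB.
Qed.
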